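(* Let $\alpha(t)=(x(t),y(t))_{t\in T}$ be a decreasing path and $D=\{t-s:s,t\in T,\ t>s\}$. Then there exists a function $\varphi:D\to\mathbb{R}$ (necessarily nonnegative) with $$x(s)y(s)+x(t)y(t)-2x(s)y(t)=\varphi(t-s)\quad\text{for all } s,t\in T,\ s<t,$$ if and only if one of the following holds: (i) $x(t)=a,\ y(t)=b-ct$ for all $t\in T$, or $x(t)=b+ct,\ y(t)=a$ for all $t\in T$, for some $b\in\mathbb{R}$ and constants $a,c>0$; in both cases $\varphi(u)=acu$, $u\in D$. (ii) $x(t)=a+d(t-s^* )\mathbf{1}_{\{t>s^*\}}$, $y(t)=b-c(t-s^* )\mathbf{1}_{\{t\le s^*\}}$, $t\in T$, for some $s^*\in T^\circ$ and constants $a,b,c,d>0$ with $ac=bd$; in this case $\varphi(u)=acu$, $u\in D$. (iii) $x(t)=a+bt,\ y(t)=c-dt$, $t\in T$, for some $a,c\in\mathbb{R}$ and constants $b,d>0$; in this case $\varphi(u)=(ad+bc)u-bdu^2$, $u\in D$. (iv) $x(t)=ae^{ct},\ y(t)=be^{-ct}$, $t\in T$, for some constants $a,b,c>0$; in this case $\varphi(u)=2ab(1-e^{-cu})$, $u\in D$.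
   Context: $T\subseteq\mathbb{R}$ is an interval with interior $T^\circ$. A decreasing path is $\alpha(t)=(x(t),y(t))_{t\in T}$ with $x$ nondecreasing and $y$ nonincreasing continuous functions on $T$, both strictly positive on $T^\circ$, at least one not identically constant. *)

From Stdlib Require Import Reals Lra.
Open Scope R_scope.

Definition is_interval (T : R -> Prop) : Prop :=
  forall a b c, T a -> T c -> a <= b -> b <= c -> T b.

Definition interior_pt (T : R -> Prop) (t : R) : Prop :=
  exists r s, T r /\ T s /\ r < t /\ t < s.

Definition cont_on (T : R -> Prop) (f : R -> R) : Prop :=
  forall t, T t -> forall eps, 0 < eps ->
    exists delta, 0 < delta /\
      forall s, T s -> Rabs (s - t) < delta -> Rabs (f s - f t) < eps.

Definition nondecr_on (T : R -> Prop) (f : R -> R) : Prop :=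
  forall s t, T s -> T t -> s <= t -> f s <= f t.

Definition nonincr_on (T : R -> Prop) (f : R -> R) : Prop :=
  forall s t, T s -> T t -> s <= t -> f t <= f s.

Definition const_on (T : R -> Prop) (f : R -> R) : Prop :=
  forall s t, T s -> T t -> f s = f t.

Definition decreasing_path (T : R -> Prop) (x y : R -> R) : Prop :=
  nondecr_on T x /\ nonincr_on T y /\ cont_on T x /\ cont_on T y /\
  (forall t, interior_pt T t -> 0 < x t /\ 0 < y t) /\
  (~ const_on T x \/ ~ const_on T y).

Definition inD (T : R -> Prop) (u : R) : Prop :=
  exists s t, T s /\ T t /\ s < t /\ u = t - s.

Definition phi_eq (T : R -> Prop) (x y phi : R -> R) : Prop :=
  forall s t, T s -> T t -> s < t ->
    x s * y s + x t * y t - 2 * x s * y t = phi (t - s).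

Definition case_i (T : R -> Prop) (x y phi : R -> R) : Prop :=
  exists a b c, 0 < a /\ 0 < c /\
    ((forall t, T t -> x t = a /\ y t = b - c * t) \/
     (forall t, T t -> x t = b + c * t /\ y t = a)) /\
    (forall u, inD T u -> phi u = a * c * u).

Definition case_ii (T : R -> Prop) (x y phi : R -> R) : Prop :=
  exists sst a b c d, interior_pt T sst /\
    0 < a /\ 0 < b /\ 0 < c /\ 0 < d /\ a * c = b * d /\
    (forall t, T t ->
       x t = a + (if Rlt_dec sst t then d * (t - sst) else 0) /\
       y t = b - (if Rle_dec t sst then c * (t - sst) else 0)) /\
    (forall u, inD T u -> phi u = a * c * u).

Definition case_iii (T : R -> Prop) (x y phi : R -> R) : Prop :=
  exists a b c d, 0 < b /\ 0 < d /\
    (forall t, T t -> x t = a + b * t /\ y t = c - d * t) /\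
    (forall u, inD T u -> phi u = (a * d + b * c) * u - b * d * u ^ 2).

Definition case_iv (T : R -> Prop) (x y phi : R -> R) : Prop :=
  exists a b c, 0 < a /\ 0 < b /\ 0 < c /\
    (forall t, T t -> x t = a * exp (c * t) /\ y t = b * exp (- (c * t))) /\
    (forall u, inD T u -> phi u = 2 * a * b * (1 - exp (- (c * u)))).

From Stdlib Require Import Reals Lra Psatz Classical.
From Coquelicot Require Import Coquelicot.
Open Scope R_scope.

(** Write [G s t = x s y s + x t y t - 2 x s y t] (the [defect]).  The functional
    equation says exactly that [G s t] is invariant under translating the pair [(s, t)];
    hence so is every product [(x b - x a) (y c - y d)] with [a, b <= c, d].

    If [x] is constant, then [G s t] is a multiple of [y s - y t], so [y] has translation
    invariant increments and is affine (case (i)); symmetrically if [y] is constant.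
    Otherwise there are two possibilities.  Either at some point [x] has risen just before
    and [y] falls just after; then by the product invariance the same holds at every
    interior point, and this forces every translate of [x] to be an affine function of [x]
    on the interior, and likewise for [y].  Averaging the translates over a short window
    shows that such a continuous function is differentiable and solves a linear ODE
    [f' = c f + e], so [x] and [y] are exponential or affine; comparing growth ratios on a
    grid, and then the values of [G], leaves exactly cases (iii) and (iv).  Or no such
    point exists; then the supremum of the points after which [y] still falls is a kink
    [s*]: [x] is constant before it, [y] constant after it, the other coordinate is affine
    on each side, and invariance of [G] across [s*] balances the slopes (case (ii)). *)

(** * Continuity, integrals and linear ODEs on intervals *)

Lemma continuous_eps_delta (f : R -> R) (z : R) :
  continuous f z <->
  forall eps, 0 < eps ->
    exists d, 0 < d /\ forall y, Rabs (y - z) < d -> Rabs (f y - f z) < eps.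
Proof.
  unfold continuous. rewrite filterlim_locally. split.
  - intros Hc eps Heps. destruct (Hc (mkposreal eps Heps)) as [d Hd].
    exists d. split; [apply cond_pos | exact Hd].
  - intros H eps. destruct (H eps (cond_pos eps)) as [d [Hd Hd']].
    exists (mkposreal d Hd). exact Hd'.
Qed.

Lemma locally_of_Rabs (z e : R) (P : R -> Prop) :
  0 < e -> (forall y, Rabs (y - z) < e -> P y) -> locally z P.
Proof. intros He H. exists (mkposreal e He). exact H. Qed.

Lemma open_shift (I : R -> Prop) (z : R) : open I -> I z ->
  exists e, 0 < e /\ forall w, Rabs w < e -> I (z + w).
Proof.
  intros HO Iz. destruct (HO z Iz) as [e He]. exists e. split; [apply cond_pos |].
  intros w Hw. apply He. change (Rabs (z + w - z) < e).
  replace (z + w - z) with w by ring. exact Hw.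
Qed.

Lemma is_derive_val (f : R -> R) (z l l' : R) : is_derive f z l -> l = l' -> is_derive f z l'.
Proof. intros H <-. exact H. Qed.

Lemma continuous_comp_shift (f : R -> R) (a w : R) :
  continuous f (a + w) -> continuous (fun u => f (a + u)) w.
Proof.
  intros H. apply (continuous_comp (fun u => a + u) f w); [|exact H].
  apply (continuous_plus (fun _ => a) (fun u => u)); [apply continuous_const | apply continuous_id].
Qed.

Lemma is_derive_comp_shift (f : R -> R) (a l : R) :
  is_derive f a l -> is_derive (fun w => f (a + w)) 0 l.
Proof.
  intros H. eapply is_derive_val.
  - apply (is_derive_comp f (fun w => a + w)); [rewrite Rplus_0_r; exact H |].
    apply (is_derive_plus (fun _ => a) (fun w => w)); [apply is_derive_const | apply is_derive_id].
  - simpl. unfold scal, plus, zero, one; simpl. unfold mult; simpl. ring.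
Qed.

Lemma RInt_translate (f : R -> R) (z d : R) :
  ex_RInt f z (z + d) -> RInt (fun w => f (z + w)) 0 d = RInt f z (z + d).
Proof.
  intros H.
  assert (E := RInt_comp_lin f 1 z 0 d).
  rewrite !Rmult_1_l, Rplus_0_l, (Rplus_comm d) in E. rewrite <- E by exact H.
  apply RInt_ext. intros w _. unfold scal; simpl; unfold mult; simpl.
  rewrite !Rmult_1_l. f_equal. ring.
Qed.

Lemma is_derive_RInt_window (f : R -> R) (z0 d : R) : 0 < d ->
  (forall t, Rabs (t - z0) < 2 * d -> continuous f t) ->
  is_derive (fun z => RInt f z (z + d)) z0 (f (z0 + d) - f z0).
Proof.
  intros Hd Hc.
  assert (Hex : forall a b, Rabs (a - z0) < 2 * d -> Rabs (b - z0) < 2 * d -> ex_RInt f a b).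
  { intros a b Ha Hb. apply (@ex_RInt_continuous R_CompleteNormedModule). intros t Ht.
    apply Hc. apply Rabs_def2 in Ha. apply Rabs_def2 in Hb. apply Rabs_def1.
    - assert (t <= Rmax a b) by lra. unfold Rmax in *; destruct (Rle_dec a b); lra.
    - assert (Rmin a b <= t) by lra. unfold Rmin in *; destruct (Rle_dec a b); lra. }
  set (Phi := fun v => RInt f z0 v).
  assert (HPhi : forall v, Rabs (v - z0) < 2 * d -> is_derive Phi v (f v)).
  { intros v Hv. apply (@is_derive_RInt R_CompleteNormedModule f Phi z0 v); [|apply Hc; exact Hv].
    apply (locally_of_Rabs v (2 * d - Rabs (v - z0))); [lra|].
    intros b Hb. apply (@RInt_correct R_CompleteNormedModule). apply Hex.
    - rewrite Rminus_diag, Rabs_R0. lra.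
    - assert (Rabs (b - z0) <= Rabs (b - v) + Rabs (v - z0)) by
        (replace (b - z0) with ((b - v) + (v - z0)) by ring; apply Rabs_triang).
      lra. }
  apply (is_derive_ext_loc (fun z => Phi (z + d) - Phi z)).
  - apply (locally_of_Rabs z0 d _ Hd). intros z Hz. apply Rabs_def2 in Hz.
    unfold Phi. rewrite <- (RInt_Chasles f z0 z (z + d)).
    + simpl. unfold plus; simpl. ring.
    + apply Hex; [rewrite Rminus_diag, Rabs_R0 |apply Rabs_def1]; lra.
    + apply Hex; apply Rabs_def1; lra.
  - eapply is_derive_val.
    + apply (is_derive_minus (fun z => Phi (z + d)) Phi).
      * apply (is_derive_comp Phi (fun z => z + d)).
        -- apply HPhi. replace (z0 + d - z0) with d by ring. rewrite Rabs_pos_eq; lra.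
        -- apply (is_derive_plus (fun z => z) (fun _ => d));
             [apply is_derive_id | apply is_derive_const].
      * apply HPhi. rewrite Rminus_diag, Rabs_R0. lra.
    + simpl. unfold minus, plus, opp, scal, one, zero; simpl. unfold mult, plus; simpl. ring.
Qed.

Lemma interior_pt_in (T : R -> Prop) (t : R) : is_interval T -> interior_pt T t -> T t.
Proof. intros HI [r [s [Tr [Ts [Hr Hs]]]]]. apply (HI r t s); auto; lra. Qed.

Lemma interior_pt_of_lt (T : R -> Prop) (a b : R) :
  T a -> T b -> a < b -> exists z, interior_pt T z.
Proof. intros Ta Tb Hab. exists ((a + b) / 2), a, b. repeat split; auto; lra. Qed.

Lemma interior_pt_is_interval (T : R -> Prop) : is_interval (interior_pt T).
Proof.
  intros a b c [r [_ [Tr [_ [Hr _]]]]] [_ [s [_ [Ts [_ Hs]]]]] Hab Hbc.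
  exists r, s. repeat split; auto; lra.
Qed.

Lemma open_interior_pt (T : R -> Prop) : open (interior_pt T).
Proof.
  intros z [r [s [Tr [Ts [Hr Hs]]]]].
  apply (locally_of_Rabs z (Rmin (z - r) (s - z))); [apply Rmin_pos; lra|].
  intros y Hy. pose proof (Rmin_l (z - r) (s - z)). pose proof (Rmin_r (z - r) (s - z)).
  apply Rabs_def2 in Hy. exists r, s. repeat split; auto; lra.
Qed.

Lemma continuous_of_cont_on (T : R -> Prop) (f : R -> R) (z : R) :
  is_interval T -> cont_on T f -> interior_pt T z -> continuous f z.
Proof.
  intros HI Hc Hz. apply continuous_eps_delta. intros eps He.
  destruct (open_interior_pt T z Hz) as [e He'].
  destruct (Hc z (interior_pt_in T z HI Hz) eps He) as [d [Hd Hd']].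
  exists (Rmin d e). split; [apply Rmin_pos; [lra | apply cond_pos]|].
  intros y Hy. apply Hd'.
  - apply (interior_pt_in T y HI), He'. change (Rabs (y - z) < e).
    eapply Rlt_le_trans; [exact Hy | apply Rmin_r].
  - eapply Rlt_le_trans; [exact Hy | apply Rmin_l].
Qed.

Lemma interior_pt_near (T : R -> Prop) (z z0 e : R) :
  is_interval T -> T z -> interior_pt T z0 -> 0 < e ->
  exists t, interior_pt T t /\ Rabs (t - z) < e.
Proof.
  intros HI Tz Hz0 He. assert (T0 := interior_pt_in T z0 HI Hz0).
  pose proof (Rmin_l e (Rabs (z0 - z))). pose proof (Rmin_r e (Rabs (z0 - z))).
  destruct (Rtotal_order z z0) as [Hlt | [<- | Hgt]].
  - rewrite Rabs_pos_eq in * by lra.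
    exists (z + Rmin e (z0 - z) / 2). split.
    + exists z, z0. repeat split; auto; assert (0 < Rmin e (z0 - z)) by (apply Rmin_pos; lra); lra.
    + rewrite Rabs_pos_eq; assert (0 < Rmin e (z0 - z)) by (apply Rmin_pos; lra); lra.
  - exists z. split; [exact Hz0 | rewrite Rminus_diag, Rabs_R0; exact He].
  - rewrite Rabs_left in * by lra.
    exists (z - Rmin e (- (z0 - z)) / 2).
    assert (0 < Rmin e (- (z0 - z))) by (apply Rmin_pos; lra). split.
    + exists z0, z. repeat split; auto; lra.
    + rewrite Rabs_left; lra.
Qed.

Lemma eq_on_of_eq_on_interior (T : R -> Prop) (f g : R -> R) :
  is_interval T -> cont_on T f -> (forall z, continuous g z) -> (exists z0, interior_pt T z0) ->
  (forall z, interior_pt T z -> f z = g z) -> forall z, T z -> f z = g z.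
Proof.
  intros HI Hf Hg [z0 Hz0] Heq z Tz. apply NNPP. intros Hne.
  set (eps := Rabs (f z - g z) / 2).
  assert (Heps : 0 < eps).
  { assert (0 < Rabs (f z - g z)) by (apply Rabs_pos_lt; lra). unfold eps; lra. }
  destruct (Hf z Tz eps Heps) as [d1 [Hd1 Hf']].
  destruct (proj1 (continuous_eps_delta g z) (Hg z) eps Heps) as [d2 [Hd2 Hg']].
  destruct (interior_pt_near T z z0 (Rmin d1 d2) HI Tz Hz0 (Rmin_pos _ _ Hd1 Hd2)) as [t [Ht Htz]].
  specialize (Hf' t (interior_pt_in T t HI Ht) (Rlt_le_trans _ _ _ Htz (Rmin_l _ _))).
  specialize (Hg' t (Rlt_le_trans _ _ _ Htz (Rmin_r _ _))).
  rewrite (Heq t Ht) in Hf'. apply Rabs_def2 in Hf'. apply Rabs_def2 in Hg'.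
  assert (Rabs (f z - g z) < 2 * eps) by (apply Rabs_def1; lra).
  unfold eps in *. lra.
Qed.

Lemma eq_of_is_derive_0 (I : R -> Prop) (h : R -> R) : is_interval I ->
  (forall z, I z -> is_derive h z 0) -> forall a b, I a -> I b -> h a = h b.
Proof.
  intros HI Hd.
  assert (K : forall a b, I a -> I b -> a < b -> h a = h b).
  { intros a b Ia Ib Hab. apply (eq_is_derive h a b); [|exact Hab].
    intros t Ht. apply Hd. apply (HI a t b Ia Ib); lra. }
  intros a b Ia Ib. destruct (Rtotal_order a b) as [H | [<- | H]]; auto.
  symmetry; auto.
Qed.

Definition exp_affine_on (I : R -> Prop) (f : R -> R) : Prop :=
  (exists A B c, c <> 0 /\ forall z, I z -> f z = A + B * exp (c * z)) \/
  (exists A B, forall z, I z -> f z = A + B * z).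

Lemma exp_affine_of_linear_ode (I : R -> Prop) (f : R -> R) (c e : R) :
  is_interval I -> (forall z, I z -> is_derive f z (c * f z + e)) -> exp_affine_on I f.
Proof.
  intros HI Hd.
  destruct (classic (exists z0, I z0)) as [[z0 I0] | Hempty].
  2: { right. exists 0, 0. intros z Iz. exfalso. eauto. }
  destruct (Req_dec c 0) as [-> | Hc].
  - right. set (h := fun z => f z - e * z).
    assert (Hh : forall z, I z -> is_derive h z 0).
    { intros z Iz. eapply is_derive_val.
      - apply (is_derive_minus f (fun z => e * z)); [apply Hd, Iz |].
        apply is_derive_scal, is_derive_id.
      - simpl. unfold minus, plus, opp, one; simpl. ring. }
    exists (h z0), e. intros z Iz.
    rewrite (eq_of_is_derive_0 I h HI Hh z0 z I0 Iz). unfold h. ring.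
  - left. set (h := fun z => (f z + e / c) * exp (- (c * z))).
    assert (Hh : forall z, I z -> is_derive h z 0).
    { intros z Iz. eapply is_derive_val.
      - apply (is_derive_mult (fun z => f z + e / c) (fun z => exp (- (c * z)))).
        + apply (is_derive_plus f (fun _ => e / c)); [apply Hd, Iz | apply is_derive_const].
        + auto_derive; [trivial | reflexivity].
        + intros; apply Rmult_comm.
      - simpl. unfold plus, mult, zero; simpl. field. exact Hc. }
    exists (- (e / c)), (h z0), c. split; [exact Hc |]. intros z Iz.
    rewrite (eq_of_is_derive_0 I h HI Hh z0 z I0 Iz). unfold h.
    rewrite Rmult_assoc, <- exp_plus. replace (- (c * z) + c * z) with 0 by ring.
    rewrite exp_0. ring.
Qed.

(** * Functions whose translates are affine in themselves *)

(** Every translate of [f] is, on [I], an affine function of [f]. *)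
Definition translates_affine (I : R -> Prop) (f : R -> R) : Prop :=
  forall z1 z2 z3 w, I z1 -> I z2 -> I z3 -> I (z1 + w) -> I (z2 + w) -> I (z3 + w) ->
    (f (z3 + w) - f (z2 + w)) * (f z1 - f z2) = (f z3 - f z2) * (f (z1 + w) - f (z2 + w)).

Section TranslatesAffine.

Variables (I : R -> Prop) (f : R -> R).
Hypothesis I_open : open I.
Hypothesis f_cont : forall z, I z -> continuous f z.
Hypothesis f_tr : translates_affine I f.
Variables z1 z2 : R.
Hypotheses (I1 : I z1) (I2 : I z2) (f12 : f z1 <> f z2).

Let kappa (w : R) : R := (f (z1 + w) - f (z2 + w)) / (f z1 - f z2).

Lemma translate_eq (z w : R) : I z -> I (z + w) -> I (z1 + w) -> I (z2 + w) ->
  f (z + w) = f (z2 + w) + kappa w * (f z - f z2).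
Proof.
  intros Iz Izw I1w I2w. unfold kappa.
  assert (H := f_tr z1 z2 z w I1 I2 Iz I1w I2w Izw).
  apply (Rmult_eq_reg_r (f z1 - f z2)); [| lra].
  transitivity ((f (z + w) - f (z2 + w)) * (f z1 - f z2) + f (z2 + w) * (f z1 - f z2)); [ring|].
  rewrite H. field. lra.
Qed.

Lemma kappa_continuous (w : R) : I (z1 + w) -> I (z2 + w) -> continuous kappa w.
Proof.
  intros I1w I2w. unfold kappa.
  apply (continuous_mult (fun w => f (z1 + w) - f (z2 + w)) (fun _ => / (f z1 - f z2)));
    [| apply continuous_const].
  apply (continuous_minus (fun w => f (z1 + w)) (fun w => f (z2 + w)));
    apply continuous_comp_shift, f_cont; assumption.
Qed.

Lemma kappa_near_0 : exists d, 0 < d /\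
  forall w, Rabs w < d -> I (z1 + w) /\ I (z2 + w) /\ 1 / 2 <= kappa w.
Proof.
  destruct (open_shift I z1 I_open I1) as [e1 [He1 I1w]].
  destruct (open_shift I z2 I_open I2) as [e2 [He2 I2w]].
  assert (Hk0 : continuous kappa 0) by (apply kappa_continuous; rewrite Rplus_0_r; assumption).
  destruct (proj1 (continuous_eps_delta kappa 0) Hk0 (1 / 2) ltac:(lra)) as [d0 [Hd0 Hk]].
  assert (E0 : kappa 0 = 1) by (unfold kappa; rewrite !Rplus_0_r; field; lra).
  exists (Rmin d0 (Rmin e1 e2)).
  pose proof (Rmin_l d0 (Rmin e1 e2)). pose proof (Rmin_r d0 (Rmin e1 e2)).
  pose proof (Rmin_l e1 e2). pose proof (Rmin_r e1 e2).
  split; [repeat apply Rmin_pos; lra |].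
  intros w Hw. split; [| split].
  - apply I1w. lra.
  - apply I2w. lra.
  - assert (Hkw := Hk w ltac:(rewrite Rminus_0_r; lra)).
    rewrite E0 in Hkw. apply Rabs_def2 in Hkw. lra.
Qed.

(** Integrating [translate_eq] over [w] in [0, d] expresses [f] through its own
    moving integral; the integral of [kappa] does not vanish since [kappa] is close to [1]. *)
Lemma translate_average (z0 : R) : I z0 ->
  exists d K L, 0 < d /\ 0 < K /\ (forall t, Rabs (t - z0) < 2 * d -> I t) /\
    forall z, Rabs (z - z0) < d -> f z = f z2 + / K * (RInt f z (z + d) - L).
Proof.
  intros I0.
  destruct kappa_near_0 as [d1 [Hd1 Hk]]. destruct (open_shift I z0 I_open I0) as [e0 [He0 I0w]].
  set (d := Rmin d1 e0 / 2).
  assert (Hd : 0 < d /\ d < d1 /\ 2 * d <= e0).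
  { pose proof (Rmin_l d1 e0). pose proof (Rmin_r d1 e0).
    assert (0 < Rmin d1 e0) by (apply Rmin_pos; lra). unfold d; lra. }
  assert (Inear : forall t, Rabs (t - z0) < 2 * d -> I t).
  { intros t Ht. replace t with (z0 + (t - z0)) by ring. apply I0w. lra. }
  assert (Hw : forall w, 0 <= w <= d -> I (z1 + w) /\ I (z2 + w) /\ 1 / 2 <= kappa w).
  { intros w Hw. apply Hk. rewrite Rabs_pos_eq; lra. }
  assert (Hint : forall g : R -> R, (forall w, 0 <= w <= d -> continuous g w) -> ex_RInt g 0 d).
  { intros g Hg. apply (@ex_RInt_continuous R_CompleteNormedModule). intros w Hw'.
    rewrite Rmin_left, Rmax_right in Hw' by lra. apply Hg, Hw'. }
  assert (exk : ex_RInt kappa 0 d).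
  { apply Hint. intros w Hw'. apply kappa_continuous; apply Hw; exact Hw'. }
  assert (exl : ex_RInt (fun w => f (z2 + w)) 0 d).
  { apply Hint. intros w Hw'. apply continuous_comp_shift, f_cont, Hw, Hw'. }
  set (K := RInt kappa 0 d). set (L := RInt (fun w => f (z2 + w)) 0 d).
  assert (HK : d / 2 <= K).
  { apply Rle_trans with (RInt (fun _ => 1 / 2) 0 d).
    - rewrite RInt_const. simpl. unfold scal; simpl; unfold mult; simpl. lra.
    - apply RInt_le; [lra | apply ex_RInt_const | exact exk |].
      intros w Hw'. apply Hw. lra. }
  exists d, K, L. split; [lra|]. split; [lra|]. split; [exact Inear|].
  intros z Hz. apply Rabs_def2 in Hz.
  assert (E : RInt f z (z + d) = L + (f z - f z2) * K).
  { rewrite <- RInt_translate.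
    2: { apply (@ex_RInt_continuous R_CompleteNormedModule). intros t Ht.
         rewrite Rmin_left, Rmax_right in Ht by lra. apply f_cont, Inear, Rabs_def1; lra. }
    rewrite (RInt_ext _ (fun w => plus (f (z2 + w)) (scal (f z - f z2) (kappa w)))).
    - rewrite (@RInt_plus R_CompleteNormedModule); [| exact exl |
        apply (@ex_RInt_scal R_CompleteNormedModule); exact exk].
      rewrite (@RInt_scal R_CompleteNormedModule) by exact exk.
      unfold plus, scal; simpl; unfold mult; simpl. fold K L. ring.
    - intros w Hw'. rewrite Rmin_left, Rmax_right in Hw' by lra.
      destruct (Hw w ltac:(lra)) as [I1w [I2w _]].
      rewrite translate_eq; [| apply Inear, Rabs_def1; lra .. | exact I1w | exact I2w].
      unfold plus, scal; simpl; unfold mult; simpl. ring. }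
  rewrite E. field. lra.
Qed.

Lemma translates_affine_ex_derive (z0 : R) : I z0 -> ex_derive f z0.
Proof.
  intros I0. destruct (translate_average z0 I0) as [d [K [L [Hd [HK [Inear Hrep]]]]]].
  exists ((f (z0 + d) - f z0) / K).
  apply (is_derive_ext_loc (fun z => f z2 + / K * (RInt f z (z + d) - L))).
  - apply (locally_of_Rabs z0 d _ Hd). intros z Hz. symmetry. exact (Hrep z Hz).
  - eapply is_derive_val.
    + apply (is_derive_plus (fun _ => f z2)); [apply is_derive_const |].
      apply is_derive_scal.
      apply (is_derive_minus (fun z => RInt f z (z + d)) (fun _ => L)); [| apply is_derive_const].
      apply is_derive_RInt_window; [exact Hd |].
      intros t Ht. apply f_cont, Inear, Ht.
    + simpl. unfold plus, minus, opp, scal, zero; simpl. unfold mult, plus, opp; simpl. field. lra.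
Qed.

(** Differentiating [translate_eq] in [w] at [w = 0]. *)
Lemma translates_affine_linear_ode_of_neq :
  exists c e, forall z, I z -> is_derive f z (c * f z + e).
Proof.
  set (c := (Derive f z1 - Derive f z2) / (f z1 - f z2)).
  exists c, (Derive f z2 - c * f z2). intros z Iz.
  assert (Dz := Derive_correct f z (translates_affine_ex_derive z Iz)).
  assert (D1 := Derive_correct f z1 (translates_affine_ex_derive z1 I1)).
  assert (D2 := Derive_correct f z2 (translates_affine_ex_derive z2 I2)).
  assert (Hshift : is_derive (fun w => f (z2 + w) + kappa w * (f z - f z2)) 0
                     (Derive f z2 + c * (f z - f z2))).
  { unfold kappa. eapply is_derive_val.
    - apply (is_derive_plus (fun w => f (z2 + w))); [apply is_derive_comp_shift, D2 |].
      apply (is_derive_ext (fun w => (f z - f z2) / (f z1 - f z2) * (f (z1 + w) - f (z2 + w)))).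
      { intros t. simpl. field. lra. }
      apply is_derive_scal.
      apply (is_derive_minus (fun w => f (z1 + w)) (fun w => f (z2 + w)));
        apply is_derive_comp_shift; [exact D1 | exact D2].
    - unfold c. simpl. unfold plus, minus, opp, scal; simpl. unfold mult, plus, opp; simpl. field. lra. }
  assert (Hz : is_derive (fun w => f (z + w)) 0 (Derive f z2 + c * (f z - f z2))).
  { apply (is_derive_ext_loc (fun w => f (z2 + w) + kappa w * (f z - f z2))); [| exact Hshift].
    destruct (open_shift I z I_open Iz) as [e [He Izw]].
    destruct (open_shift I z1 I_open I1) as [e1 [He1 I1w]].
    destruct (open_shift I z2 I_open I2) as [e2 [He2 I2w]].
    apply (locally_of_Rabs 0 (Rmin e (Rmin e1 e2))); [repeat apply Rmin_pos; lra |].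
    intros w Hw. rewrite Rminus_0_r in Hw.
    pose proof (Rmin_l e (Rmin e1 e2)). pose proof (Rmin_r e (Rmin e1 e2)).
    pose proof (Rmin_l e1 e2). pose proof (Rmin_r e1 e2).
    symmetry. apply translate_eq; [exact Iz | apply Izw | apply I1w | apply I2w]; lra. }
  apply is_derive_unique in Hz. rewrite (is_derive_unique _ _ _ (is_derive_comp_shift f z _ Dz)) in Hz.
  rewrite Hz in Dz. eapply is_derive_val; [exact Dz |]. ring.
Qed.

End TranslatesAffine.

Lemma translates_affine_linear_ode (I : R -> Prop) (f : R -> R) :
  open I -> (forall z, I z -> continuous f z) -> translates_affine I f ->
  exists c e, forall z, I z -> is_derive f z (c * f z + e).
Proof.
  intros HO Hc Htr.
  destruct (classic (exists z1 z2, I z1 /\ I z2 /\ f z1 <> f z2))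
    as [[z1 [z2 [I1 [I2 Hne]]]] | Hconst].
  - exact (translates_affine_linear_ode_of_neq I f HO Hc Htr z1 z2 I1 I2 Hne).
  - exists 0, 0. intros z Iz.
    apply (is_derive_ext_loc (fun _ => f z)).
    + destruct (HO z Iz) as [e He]. exists e. intros t Ht.
      apply NNPP. intros Hne. apply Hconst. exists z, t. auto.
    + eapply is_derive_val; [apply is_derive_const |]. simpl. unfold zero; simpl. ring.
Qed.

Lemma exp_affine_of_translates_affine (T : R -> Prop) (f : R -> R) :
  is_interval T -> cont_on T f -> (exists z, interior_pt T z) ->
  translates_affine (interior_pt T) f -> exp_affine_on T f.
Proof.
  intros HI Hc Hz Htr.
  destruct (translates_affine_linear_ode (interior_pt T) f (open_interior_pt T)
              (fun z Hz => continuous_of_cont_on T f z HI Hc Hz) Htr) as [c [e Hd]].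
  destruct (exp_affine_of_linear_ode _ f c e (interior_pt_is_interval T) Hd)
    as [[A [B [c' [Hc' HF]]]] | [A [B HF]]].
  - left. exists A, B, c'. split; [exact Hc' |].
    apply (eq_on_of_eq_on_interior T f (fun z => A + B * exp (c' * z))); auto.
    intros z. apply (@ex_derive_continuous R_AbsRing R_NormedModule). auto_derive. trivial.
  - right. exists A, B.
    apply (eq_on_of_eq_on_interior T f (fun z => A + B * z)); auto.
    intros z. apply (@ex_derive_continuous R_AbsRing R_NormedModule). auto_derive. trivial.
Qed.

Lemma exp_step_ratio (A B c a l : R) :
  (A + B * exp (c * (a + l + l))) - (A + B * exp (c * (a + l))) =
  exp (c * l) * ((A + B * exp (c * (a + l))) - (A + B * exp (c * a))).
Proof. rewrite !Rmult_plus_distr_l, !exp_plus. ring. Qed.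

Lemma exp_neq_1 (u : R) : u <> 0 -> exp u <> 1.
Proof. intros Hu E. apply Hu, exp_inv. rewrite exp_0. exact E. Qed.

Lemma exp_step_neq (A B c a l : R) : B <> 0 -> c <> 0 -> l <> 0 ->
  A + B * exp (c * (a + l)) <> A + B * exp (c * a).
Proof.
  intros HB Hc Hl E.
  assert (Ea : exp (c * a) * (exp (c * l) - 1) = 0).
  { apply (Rmult_eq_reg_l B); [| exact HB].
    rewrite Rmult_plus_distr_l, exp_plus in E. lra. }
  apply Rmult_integral in Ea as [Ea | Ea].
  - pose proof (exp_pos (c * a)). lra.
  - apply (exp_neq_1 (c * l)); [apply Rmult_integral_contrapositive; auto | lra].
Qed.

Lemma coef_neq_0_of_nonconst (T : R -> Prop) (f g : R -> R) (A B : R) :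
  (forall z, T z -> f z = A + B * g z) -> ~ const_on T f -> B <> 0.
Proof. intros Hf Hn ->. apply Hn. intros s t Ts Tt. rewrite (Hf s Ts), (Hf t Tt). ring. Qed.

Lemma exp_form_step (T : R -> Prop) (f : R -> R) (A B c a l : R) :
  (forall z, T z -> f z = A + B * exp (c * z)) -> T a -> T (a + l) -> T (a + l + l) ->
  f (a + l + l) - f (a + l) = exp (c * l) * (f (a + l) - f a).
Proof. intros Hf Ta Ta1 Ta2. rewrite !Hf by assumption. apply exp_step_ratio. Qed.

Lemma affine_form_step (T : R -> Prop) (f : R -> R) (A B a l : R) :
  (forall z, T z -> f z = A + B * z) -> T a -> T (a + l) -> T (a + l + l) ->
  f (a + l + l) - f (a + l) = 1 * (f (a + l) - f a).
Proof. intros Hf Ta Ta1 Ta2. rewrite !Hf by assumption. ring. Qed.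

Lemma exp_form_step_neq (T : R -> Prop) (f : R -> R) (A B c a l : R) :
  (forall z, T z -> f z = A + B * exp (c * z)) -> ~ const_on T f -> c <> 0 -> l <> 0 ->
  T a -> T (a + l) -> f (a + l) <> f a.
Proof.
  intros Hf Hn Hc Hl Ta Ta1. rewrite !Hf by assumption.
  apply exp_step_neq; auto. exact (coef_neq_0_of_nonconst T f (fun z => exp (c * z)) A B Hf Hn).
Qed.

Lemma affine_form_step_neq (T : R -> Prop) (f : R -> R) (A B a l : R) :
  (forall z, T z -> f z = A + B * z) -> ~ const_on T f -> l <> 0 ->
  T a -> T (a + l) -> f (a + l) <> f a.
Proof.
  intros Hf Hn Hl Ta Ta1. rewrite !Hf by assumption.
  assert (HB := coef_neq_0_of_nonconst T f (fun z => z) A B Hf Hn).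
  intros E. apply HB. apply (Rmult_eq_reg_r l); [| exact Hl]. lra.
Qed.

Lemma affine_of_invariant_increments (J : R -> Prop) (f : R -> R) :
  is_interval J -> cont_on J f -> (exists z, interior_pt J z) ->
  (forall s t h, J s -> J t -> J (s + h) -> J (t + h) -> f (t + h) - f (s + h) = f t - f s) ->
  exists A B, forall t, J t -> f t = A + B * t.
Proof.
  intros HJ Hc Hz Hinc.
  destruct (classic (const_on J f)) as [Hconst | Hnc].
  { destruct Hz as [z0 Hz0]. exists (f z0), 0. intros t Jt.
    rewrite (Hconst t z0 Jt (interior_pt_in J z0 HJ Hz0)). ring. }
  assert (Htr : translates_affine (interior_pt J) f).
  { intros z1 z2 z3 w I1 I2 I3 I1w I2w I3w.
    rewrite (Hinc z2 z3 w), (Hinc z2 z1 w) by (apply interior_pt_in; auto). ring. }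
  destruct (exp_affine_of_translates_affine J f HJ Hc Hz Htr) as [[A [B [c [Hc0 HF]]]] | HF];
    [exfalso | exact HF].
  destruct Hz as [z0 [a [b [Ja [Jb [Ha Hb]]]]]].
  set (l := (b - a) / 2).
  assert (Hl : 0 < l) by (unfold l; lra).
  assert (Ja1 : J (a + l)) by (apply (HJ a _ b); auto; unfold l; lra).
  assert (Ja2 : J (a + l + l)) by (apply (HJ a _ b); auto; unfold l; lra).
  assert (E := Hinc a (a + l) l Ja Ja1 Ja1 Ja2).
  rewrite (exp_form_step J f A B c a l HF Ja Ja1 Ja2) in E.
  apply (exp_form_step_neq J f A B c a l HF Hnc Hc0 ltac:(lra) Ja Ja1).
  apply (Rmult_eq_reg_l (exp (c * l) - 1)); [lra |].
  apply Rminus_eq_contra, exp_neq_1, Rmult_integral_contrapositive. split; lra.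
Qed.

Lemma small_step_neq (f : R -> R) (p q e : R) : p < q -> 0 < e -> f p <> f q ->
  exists u v, p <= u /\ u < v /\ v <= q /\ v - u < e /\ f u <> f v.
Proof.
  intros Hpq He Hne.
  destruct (archimed_cor1 (e / (q - p)) ltac:(apply Rdiv_lt_0_compat; lra)) as [N [HN HN0]].
  assert (HNpos : 0 < INR N) by (apply lt_0_INR; exact HN0).
  set (d := (q - p) / INR N).
  assert (Hd : 0 < d < e).
  { unfold d. split; [apply Rdiv_lt_0_compat; lra |].
    apply (Rmult_lt_reg_r (/ (q - p))); [apply Rinv_0_lt_compat; lra |].
    replace ((q - p) / INR N * / (q - p)) with (/ INR N) by (field; lra).
    replace (e * / (q - p)) with (e / (q - p)) by reflexivity. exact HN. }
  assert (Hstep : forall n, f p <> f (p + INR n * d) ->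
            exists k, (k < n)%nat /\ f (p + INR k * d) <> f (p + INR (S k) * d)).
  { induction n as [| n IH]; intros Hn.
    - exfalso. apply Hn. simpl. f_equal. ring.
    - destruct (Req_dec (f p) (f (p + INR n * d))) as [Eq | Neq].
      + exists n. split; [lia |]. rewrite <- Eq. exact Hn.
      + destruct (IH Neq) as [k [Hk Hfk]]. exists k. split; [lia | exact Hfk]. }
  destruct (Hstep N) as [k [Hk Hfk]].
  { replace (p + INR N * d) with q by (unfold d; field; lra). exact Hne. }
  exists (p + INR k * d), (p + INR (S k) * d).
  assert (Hk0 : 0 <= INR k) by apply pos_INR.
  assert (HkN : INR (S k) <= INR N) by (apply le_INR; lia).
  assert (Hq : q = p + INR N * d) by (unfold d; field; lra).
  rewrite S_INR in *. repeat split; [nra .. | exact Hfk].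
Qed.

Lemma max_of_three (a b c : R) :
  exists m, (m = a \/ m = b \/ m = c) /\ a <= m /\ b <= m /\ c <= m.
Proof.
  destruct (Rle_dec a b), (Rle_dec b c), (Rle_dec a c);
    first [ exists a; repeat split; auto; lra
          | exists b; repeat split; auto; lra
          | exists c; repeat split; auto; lra ].
Qed.

Lemma min_of_three (a b c : R) :
  exists m, (m = a \/ m = b \/ m = c) /\ m <= a /\ m <= b /\ m <= c.
Proof.
  destruct (max_of_three (- a) (- b) (- c)) as [m [Hm H]].
  exists (- m). split; [| lra]. destruct Hm as [-> | [-> | ->]]; lra.
Qed.

Lemma proportional_of_common_factor (X1 X1' X3 X3' Y Y' : R) :
  X1 * Y = X1' * Y' -> X3 * Y = X3' * Y' -> Y <> 0 \/ Y' <> 0 -> X3' * X1 = X3 * X1'.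
Proof.
  intros E1 E3 [HY | HY].
  - apply (Rmult_eq_reg_r Y); [| exact HY].
    transitivity (X3' * (X1 * Y)); [ring |]. rewrite E1.
    transitivity (X1' * (X3' * Y')); [ring |]. rewrite <- E3. ring.
  - apply (Rmult_eq_reg_r Y'); [| exact HY].
    transitivity (X1 * (X3' * Y')); [ring |]. rewrite <- E3.
    transitivity (X3 * (X1 * Y)); [ring |]. rewrite E1. ring.
Qed.

Lemma nondecr_rises (T : R -> Prop) (f : R -> R) :
  nondecr_on T f -> ~ const_on T f -> exists u v, T u /\ T v /\ u < v /\ f u < f v.
Proof.
  intros Hm Hn. apply NNPP. intros Hno. apply Hn.
  assert (Hle : forall u v, T u -> T v -> u <= v -> f u = f v).
  { intros u v Tu Tv Huv.
    destruct (Rle_lt_or_eq_dec _ _ (Hm u v Tu Tv Huv)) as [Hlt | Heq]; [| exact Heq].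
    destruct (Rle_lt_or_eq_dec _ _ Huv) as [Huv' | <-]; [| lra].
    exfalso. apply Hno. exists u, v. auto. }
  intros s t Ts Tt. destruct (Rle_dec s t); [apply Hle | symmetry; apply Hle]; auto; lra.
Qed.

Lemma nonincr_falls (T : R -> Prop) (f : R -> R) :
  nonincr_on T f -> ~ const_on T f -> exists u v, T u /\ T v /\ u < v /\ f v < f u.
Proof.
  intros Hm Hn.
  destruct (nondecr_rises T (fun t => - f t)) as [u [v [Tu [Tv [Huv Hf]]]]].
  - intros s t Ts Tt Hst. pose proof (Hm s t Ts Tt Hst). lra.
  - intros Hc. apply Hn. intros s t Ts Tt. pose proof (Hc s t Ts Tt). lra.
  - exists u, v. repeat split; auto; lra.
Qed.

Lemma cont_on_subset (T J : R -> Prop) (f : R -> R) :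
  (forall t, J t -> T t) -> cont_on T f -> cont_on J f.
Proof.
  intros HJ Hc t Jt eps He. destruct (Hc t (HJ t Jt) eps He) as [d [Hd H]].
  exists d. split; auto.
Qed.

Lemma is_lub_approx (E : R -> Prop) (m t : R) : is_lub E m -> t < m -> exists e, E e /\ t < e.
Proof.
  intros [Hub Hleast] Ht. apply NNPP. intros Hno.
  assert (m <= t); [| lra].
  apply Hleast. intros e He. apply Rnot_lt_le. intros Hlt. apply Hno. exists e. auto.
Qed.

Lemma hyperbola_geometric_values (alpha beta U Q : R) : 0 < U -> 0 < Q -> Q <> 1 ->
  alpha / (Q * (U * Q)) + beta * (U * Q) = alpha / (Q * U) + beta * U ->
  alpha / (Q * (U * Q * Q)) + beta * (U * Q * Q) = alpha / (Q * (U * Q)) + beta * (U * Q) ->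
  alpha = 0 /\ beta = 0.
Proof.
  intros HU HQ HQ1 E1 E2.
  assert (Step : forall V, 0 < V ->
            alpha / (Q * (V * Q)) + beta * (V * Q) = alpha / (Q * V) + beta * V ->
            alpha = beta * (Q * Q * V * V)).
  { intros V HV E.
    assert (Z : (Q - 1) * (beta * (Q * Q * V * V) - alpha) / (Q * Q * V) = 0).
    { transitivity ((alpha / (Q * (V * Q)) + beta * (V * Q)) - (alpha / (Q * V) + beta * V)).
      - field. lra.
      - rewrite E. ring. }
    unfold Rdiv in Z. apply Rmult_integral in Z as [Z | Z].
    - apply Rmult_integral in Z as [Z | Z]; lra.
    - exfalso. revert Z. apply Rinv_neq_0_compat.
      assert (0 < Q * Q * V) by (repeat apply Rmult_lt_0_compat; lra). lra. }
  assert (H1 := Step U HU E1). assert (H2 := Step (U * Q) ltac:(nra) E2).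
  assert (Hb : beta * (Q * Q * U * U) * ((Q - 1) * (Q + 1)) = 0).
  { transitivity (beta * (Q * Q * (U * Q) * (U * Q)) - beta * (Q * Q * U * U)); [ring |]. lra. }
  assert (beta = 0).
  { apply Rmult_integral in Hb as [Hb | Hb].
    - apply Rmult_integral in Hb as [Hb | Hb]; [exact Hb |].
      assert (0 < Q * Q * U * U) by (repeat apply Rmult_lt_0_compat; lra). lra.
    - apply Rmult_integral in Hb as [Hb | Hb]; lra. }
  split; [rewrite H1; subst beta; ring | assumption].
Qed.

(** * Decreasing paths *)

Definition defect (x y : R -> R) (s t : R) : R := x s * y s + x t * y t - 2 * x s * y t.

Definition rises_before (T : R -> Prop) (f : R -> R) (t : R) : Prop :=
  exists a, T a /\ a < t /\ f a < f t.

Definition falls_after (T : R -> Prop) (f : R -> R) (t : R) : Prop :=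
  exists d, T d /\ t < d /\ f d < f t.

Section DecreasingPath.

Variables (T : R -> Prop) (x y phi : R -> R).
Hypothesis HI : is_interval T.
Hypothesis x_mono : nondecr_on T x.
Hypothesis y_mono : nonincr_on T y.
Hypothesis x_cont : cont_on T x.
Hypothesis y_cont : cont_on T y.
Hypothesis xy_pos : forall t, interior_pt T t -> 0 < x t /\ 0 < y t.
Hypothesis Hphi : phi_eq T x y phi.

Lemma defect_shift (s t h : R) : T s -> T t -> T (s + h) -> T (t + h) -> s <= t ->
  defect x y (s + h) (t + h) = defect x y s t.
Proof.
  intros Ts Tt Tsh Tth Hst. unfold defect.
  destruct (Req_dec s t) as [<- | Hne]; [ring |].
  rewrite (Hphi s t), (Hphi (s + h) (t + h)) by (auto; lra). f_equal. ring.
Qed.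

Lemma increment_product_shift (a b c d h : R) :
  T a -> T b -> T c -> T d -> T (a + h) -> T (b + h) -> T (c + h) -> T (d + h) ->
  a <= c -> a <= d -> b <= c -> b <= d ->
  (x (b + h) - x (a + h)) * (y (c + h) - y (d + h)) = (x b - x a) * (y c - y d).
Proof.
  intros Ta Tb Tc Td Tah Tbh Tch Tdh Hac Had Hbc Hbd.
  assert (E : forall u v w z, (x v - x u) * (y w - y z) =
            (defect x y u w - defect x y u z - defect x y v w + defect x y v z) / 2).
  { intros. unfold defect. field. }
  rewrite !E, !defect_shift by assumption. reflexivity.
Qed.

Lemma phi_of_defect (g : R -> R) :
  (forall s t, T s -> T t -> s < t -> defect x y s t = g (t - s)) ->
  forall u, inD T u -> phi u = g u.
Proof.
  intros H u [s [t [Ts [Tt [Hst ->]]]]]. rewrite <- (Hphi s t Ts Tt Hst). apply H; auto.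
Qed.

Lemma affine_of_defect_eq (J : R -> Prop) (f : R -> R) (k : R) :
  (forall t, J t -> T t) -> is_interval J -> cont_on J f -> (exists z, interior_pt J z) ->
  k <> 0 -> (forall s t, J s -> J t -> defect x y s t = k * (f t - f s)) ->
  exists A B, forall t, J t -> f t = A + B * t.
Proof.
  intros HJT HJ Hc Hz Hk Hdef. apply affine_of_invariant_increments; auto.
  intros s t h Js Jt Jsh Jth. apply (Rmult_eq_reg_l k); [| exact Hk].
  destruct (Rle_dec s t) as [Hst | Hst].
  - rewrite <- !Hdef by assumption. apply defect_shift; auto.
  - assert (E := defect_shift t s h (HJT t Jt) (HJT s Js) (HJT _ Jth) (HJT _ Jsh) ltac:(lra)).
    rewrite !Hdef in E by assumption. lra.
Qed.

Lemma case_i_of_const_x : const_on T x -> ~ const_on T y -> case_i T x y phi.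
Proof.
  intros Cx Ny.
  destruct (nonincr_falls T y y_mono Ny) as [u [v [Tu [Tv [Huv Hyuv]]]]].
  destruct (interior_pt_of_lt T u v Tu Tv Huv) as [z0 Hz0].
  assert (Ha : 0 < x z0) by apply (xy_pos z0 Hz0).
  assert (Xa : forall t, T t -> x t = x z0).
  { intros t Tt. apply Cx; [exact Tt | apply interior_pt_in; auto]. }
  destruct (affine_of_defect_eq T y (- x z0)) as [A [B HY]]; auto.
  - exists z0. exact Hz0.
  - lra.
  - intros s t Ts Tt. unfold defect. rewrite (Xa s Ts), (Xa t Tt). ring.
  - assert (HB : B < 0) by (rewrite !HY in Hyuv by assumption; nra).
    exists (x z0), A, (- B). split; [lra |]. split; [lra |]. split.
    + left. intros t Tt. rewrite HY by exact Tt. split; [apply Xa, Tt | ring].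
    + apply phi_of_defect. intros s t Ts Tt _. unfold defect.
      rewrite (Xa s Ts), (Xa t Tt), (HY s Ts), (HY t Tt). ring.
Qed.

Lemma case_i_of_const_y : const_on T y -> ~ const_on T x -> case_i T x y phi.
Proof.
  intros Cy Nx.
  destruct (nondecr_rises T x x_mono Nx) as [u [v [Tu [Tv [Huv Hxuv]]]]].
  destruct (interior_pt_of_lt T u v Tu Tv Huv) as [z0 Hz0].
  assert (Hb : 0 < y z0) by apply (xy_pos z0 Hz0).
  assert (Yb : forall t, T t -> y t = y z0).
  { intros t Tt. apply Cy; [exact Tt | apply interior_pt_in; auto]. }
  destruct (affine_of_defect_eq T x (y z0)) as [A [B HX]]; auto.
  - exists z0. exact Hz0.
  - lra.
  - intros s t Ts Tt. unfold defect. rewrite (Yb s Ts), (Yb t Tt). ring.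
  - assert (HB : 0 < B) by (rewrite !HX in Hxuv by assumption; nra).
    exists (y z0), A, B. split; [lra |]. split; [lra |]. split.
    + right. intros t Tt. rewrite HX by exact Tt. split; [reflexivity | apply Yb, Tt].
    + apply phi_of_defect. intros s t Ts Tt _. unfold defect.
      rewrite (Yb s Ts), (Yb t Tt), (HX s Ts), (HX t Tt). ring.
Qed.

(** Shifting a short step on which [y] falls against a fixed rise of [x] before it. *)
Lemma falls_after_interior (t0 t : R) : rises_before T x t0 -> falls_after T y t0 ->
  interior_pt T t -> falls_after T y t.
Proof.
  intros [a [Ta [Ha Hxa]]] [d [Td [Hd Hyd]]] Ht.
  assert (Tt : T t) by (apply interior_pt_in; auto).
  destruct Ht as [r [r' [Tr [Tr' [Hrt Htr']]]]].
  assert (Tt0 : T t0) by (apply (HI a t0 d); auto; lra).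
  destruct (small_step_neq y t0 d (r' - t) Hd ltac:(lra) ltac:(lra))
    as [u [v [Hu [Huv [Hv [Hvu Hyuv]]]]]].
  assert (Tu : T u) by (apply (HI t0 u d); auto; lra).
  assert (Tv : T v) by (apply (HI t0 v d); auto; lra).
  assert (Hyv : y v < y u) by (pose proof (y_mono u v Tu Tv ltac:(lra)); lra).
  destruct (Rle_dec t u) as [Htu | Htu].
  - exists v. split; [exact Tv | split; [lra |]]. pose proof (y_mono t u Tt Tu Htu). lra.
  - set (h := t - u).
    assert (Euh : u + h = t) by (unfold h; ring).
    assert (Tah : T (a + h)) by (apply (HI a _ t); auto; unfold h; lra).
    assert (Tvh : T (v + h)) by (apply (HI t _ r'); auto; unfold h; lra).
    assert (K := increment_product_shift a u u v h Ta Tu Tu Tv Tah (eq_ind_r T Tt Euh)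
                   (eq_ind_r T Tt Euh) Tvh ltac:(lra) ltac:(lra) ltac:(lra) ltac:(lra)).
    rewrite Euh in K.
    assert (Hxu : x a < x u) by (pose proof (x_mono t0 u Tt0 Tu ltac:(lra)); lra).
    assert (0 < (x u - x a) * (y u - y v)) by (apply Rmult_lt_0_compat; lra).
    exists (v + h). split; [exact Tvh | split; [unfold h; lra |]].
    pose proof (y_mono t (v + h) Tt Tvh ltac:(unfold h; lra)).
    destruct (Req_dec (y (v + h)) (y t)) as [E | E]; [| lra].
    rewrite E, Rminus_diag, Rmult_0_r in K. lra.
Qed.

Lemma rises_before_interior (t0 t : R) : rises_before T x t0 -> falls_after T y t0 ->
  interior_pt T t -> rises_before T x t.
Proof.
  intros [a [Ta [Ha Hxa]]] [d [Td [Hd Hyd]]] Ht.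
  assert (Tt : T t) by (apply interior_pt_in; auto).
  destruct Ht as [r [r' [Tr [Tr' [Hrt Htr']]]]].
  assert (Tt0 : T t0) by (apply (HI a t0 d); auto; lra).
  destruct (small_step_neq x a t0 (t - r) Ha ltac:(lra) ltac:(lra))
    as [u [v [Hu [Huv [Hv [Hvu Hxuv]]]]]].
  assert (Tu : T u) by (apply (HI a u t0); auto; lra).
  assert (Tv : T v) by (apply (HI a v t0); auto; lra).
  assert (Hxv : x u < x v) by (pose proof (x_mono u v Tu Tv ltac:(lra)); lra).
  destruct (Rle_dec v t) as [Hvt | Hvt].
  - exists u. split; [exact Tu | split; [lra |]]. pose proof (x_mono v t Tv Tt Hvt). lra.
  - set (h := t - v).
    assert (Evh : v + h = t) by (unfold h; ring).
    assert (Tuh : T (u + h)) by (apply (HI r _ t); auto; unfold h; lra).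
    assert (Tt0h : T (t0 + h)) by (apply (HI t _ d); auto; unfold h; lra).
    assert (Tdh : T (d + h)) by (apply (HI t _ d); auto; unfold h; lra).
    assert (K := increment_product_shift u v t0 d h Tu Tv Tt0 Td Tuh (eq_ind_r T Tt Evh)
                   Tt0h Tdh ltac:(lra) ltac:(lra) ltac:(lra) ltac:(lra)).
    rewrite Evh in K.
    assert (0 < (x v - x u) * (y t0 - y d)) by (apply Rmult_lt_0_compat; lra).
    exists (u + h). split; [exact Tuh | split; [unfold h; lra |]].
    pose proof (x_mono (u + h) t Tuh Tt ltac:(unfold h; lra)).
    destruct (Req_dec (x (u + h)) (x t)) as [E | E]; [| lra].
    rewrite E, Rminus_diag, Rmult_0_l in K. lra.
Qed.

Lemma translates_affine_x : (forall t, interior_pt T t -> falls_after T y t) ->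
  translates_affine (interior_pt T) x.
Proof.
  intros Hfall z1 z2 z3 w I1 I2 I3 I1w I2w I3w.
  assert (Tin : forall z, interior_pt T z -> T z) by (intros; apply interior_pt_in; auto).
  destruct (max_of_three z1 z2 z3) as [c [Hc [H1 [H2 H3]]]].
  assert (Ic : interior_pt T c /\ interior_pt T (c + w)) by (destruct Hc as [-> | [-> | ->]]; auto).
  destruct Ic as [Ic Icw].
  assert (Hd : exists d, T d /\ T (d + w) /\ c <= d /\
                 (y c - y d <> 0 \/ y (c + w) - y (d + w) <> 0)).
  { destruct (Rle_dec 0 w).
    - destruct (Hfall (c + w) Icw) as [d [Td [Hcd Hyd]]].
      exists (d - w). replace (d - w + w) with d by ring.
      split; [apply (HI c _ d); auto; lra |]. split; [exact Td |]. split; [lra | right; lra].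
    - destruct (Hfall c Ic) as [d [Td [Hcd Hyd]]].
      exists d. split; [exact Td |]. split; [apply (HI (c + w) _ d); auto; lra |].
      split; [lra | left; lra]. }
  destruct Hd as [d [Td [Tdw [Hcd Hy]]]].
  assert (K : forall z, interior_pt T z -> interior_pt T (z + w) -> z <= c ->
            (x z - x z2) * (y c - y d) = (x (z + w) - x (z2 + w)) * (y (c + w) - y (d + w))).
  { intros z Iz Izw Hz. symmetry. apply increment_product_shift; auto; lra. }
  exact (proportional_of_common_factor _ _ _ _ _ _ (K z1 I1 I1w H1) (K z3 I3 I3w H3) Hy).
Qed.

Lemma translates_affine_y : (forall t, interior_pt T t -> rises_before T x t) ->
  translates_affine (interior_pt T) y.
Proof.
  intros Hrise z1 z2 z3 w I1 I2 I3 I1w I2w I3w.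
  assert (Tin : forall z, interior_pt T z -> T z) by (intros; apply interior_pt_in; auto).
  destruct (min_of_three z1 z2 z3) as [b [Hb [H1 [H2 H3]]]].
  assert (Ib : interior_pt T b /\ interior_pt T (b + w)) by (destruct Hb as [-> | [-> | ->]]; auto).
  destruct Ib as [Ib Ibw].
  assert (Ha : exists a, T a /\ T (a + w) /\ a <= b /\
                 (x b - x a <> 0 \/ x (b + w) - x (a + w) <> 0)).
  { destruct (Rle_dec w 0).
    - destruct (Hrise (b + w) Ibw) as [a [Ta [Hab Hxa]]].
      exists (a - w). replace (a - w + w) with a by ring.
      split; [apply (HI a _ b); auto; lra |]. split; [exact Ta |]. split; [lra | right; lra].
    - destruct (Hrise b Ib) as [a [Ta [Hab Hxa]]].
      exists a. split; [exact Ta |]. split; [apply (HI a _ (b + w)); auto; lra |].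
      split; [lra | left; lra]. }
  destruct Ha as [a [Ta [Taw [Hab Hx]]]].
  assert (K : forall z, interior_pt T z -> interior_pt T (z + w) -> b <= z ->
            (y z2 - y z) * (x b - x a) = (y (z2 + w) - y (z + w)) * (x (b + w) - x (a + w))).
  { intros z Iz Izw Hz. rewrite (Rmult_comm (y z2 - y z)), (Rmult_comm (y (z2 + w) - y (z + w))).
    symmetry. apply increment_product_shift; auto; lra. }
  assert (H := proportional_of_common_factor _ _ _ _ _ _ (K z1 I1 I1w H1) (K z3 I3 I3w H3) Hx).
  lra.
Qed.

Lemma exp_affine_x (t0 : R) : rises_before T x t0 -> falls_after T y t0 -> exp_affine_on T x.
Proof.
  intros Hr Hf. apply exp_affine_of_translates_affine; auto.
  - destruct Hr as [a [Ta [Ha _]]], Hf as [d [Td [Hd _]]]. apply (interior_pt_of_lt T a d); auto; lra.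
  - apply translates_affine_x. intros t Ht. apply (falls_after_interior t0); auto.
Qed.

Lemma exp_affine_y (t0 : R) : rises_before T x t0 -> falls_after T y t0 -> exp_affine_on T y.
Proof.
  intros Hr Hf. apply exp_affine_of_translates_affine; auto.
  - destruct Hr as [a [Ta [Ha _]]], Hf as [d [Td [Hd _]]]. apply (interior_pt_of_lt T a d); auto; lra.
  - apply translates_affine_y. intros t Ht. apply (rises_before_interior t0); auto.
Qed.

Lemma step_ratios_inverse (u l : R) : 0 < l -> T u -> T (u + l + l + l + l) ->
  forall q1 q2, x (u + l + l) - x (u + l) = q1 * (x (u + l) - x u) ->
  y (u + l + l + l + l) - y (u + l + l + l) = q2 * (y (u + l + l + l) - y (u + l + l)) ->
  x (u + l) <> x u -> y (u + l + l + l) <> y (u + l + l) -> q1 * q2 = 1.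
Proof.
  intros Hl Tu Tu4 q1 q2 Hx Hy Hx0 Hy0.
  assert (Tg : forall z, u <= z <= u + l + l + l + l -> T z)
    by (intros z Hz; apply (HI u z (u + l + l + l + l)); auto; lra).
  assert (K := increment_product_shift u (u + l) (u + l + l) (u + l + l + l) l
                 ltac:(apply Tg; lra) ltac:(apply Tg; lra) ltac:(apply Tg; lra) ltac:(apply Tg; lra)
                 ltac:(apply Tg; lra) ltac:(apply Tg; lra) ltac:(apply Tg; lra) ltac:(apply Tg; lra)
                 ltac:(lra) ltac:(lra) ltac:(lra) ltac:(lra)).
  assert (Z : (x (u + l) - x u) * (y (u + l + l + l) - y (u + l + l)) * (q1 * q2 - 1) = 0).
  { transitivity (q1 * (x (u + l) - x u) * (q2 * (y (u + l + l + l) - y (u + l + l)))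
                  - (x (u + l) - x u) * (y (u + l + l + l) - y (u + l + l))); [ring |].
    rewrite <- Hx, <- Hy. lra. }
  apply Rmult_integral in Z as [Z | Z]; [| lra].
  exfalso. apply Rmult_integral in Z as [Z | Z]; lra.
Qed.

Lemma exp_affine_rates (a b : R) : T a -> T b -> a < b -> ~ const_on T x -> ~ const_on T y ->
  exp_affine_on T x -> exp_affine_on T y ->
  (exists A1 B1 A2 B2 c, c <> 0 /\ forall z, T z ->
     x z = A1 + B1 * exp (c * z) /\ y z = A2 + B2 * exp (- (c * z))) \/
  (exists A1 B1 A2 B2, forall z, T z -> x z = A1 + B1 * z /\ y z = A2 + B2 * z).
Proof.
  intros Ta Tb Hab Hnx Hny Fx Fy.
  set (l := (b - a) / 4).
  assert (Hl : 0 < l) by (unfold l; lra).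
  assert (Tg : forall z, a <= z <= a + l + l + l + l -> T z)
    by (intros z Hz; apply (HI a z b); auto; unfold l in *; lra).
  assert (Ratio := step_ratios_inverse a l Hl Ta ltac:(apply Tg; lra)).
  assert (Hl0 : l <> 0) by lra.
  destruct Fx as [[A1 [B1 [c1 [Hc1 HX]]]] | [A1 [B1 HX]]];
  destruct Fy as [[A2 [B2 [c2 [Hc2 HY]]]] | [A2 [B2 HY]]].
  - assert (Hq : exp (c1 * l) * exp (c2 * l) = 1).
    { apply Ratio; [eapply exp_form_step | eapply exp_form_step |
                    eapply exp_form_step_neq | eapply exp_form_step_neq];
        try eassumption; apply Tg; lra. }
    rewrite <- exp_plus, <- exp_0 in Hq. apply exp_inv in Hq.
    assert (Hc : c2 = - c1) by nra. subst c2.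
    left. exists A1, B1, A2, B2, c1. split; [exact Hc1 |]. intros z Tz.
    rewrite HX, HY by exact Tz. split; [reflexivity |]. do 3 f_equal. ring.
  - assert (Hq : exp (c1 * l) * 1 = 1).
    { apply Ratio; [eapply exp_form_step | eapply affine_form_step |
                    eapply exp_form_step_neq | eapply affine_form_step_neq];
        try eassumption; apply Tg; lra. }
    exfalso. apply (exp_neq_1 (c1 * l)); [apply Rmult_integral_contrapositive; auto | lra].
  - assert (Hq : 1 * exp (c2 * l) = 1).
    { apply Ratio; [eapply affine_form_step | eapply exp_form_step |
                    eapply affine_form_step_neq | eapply exp_form_step_neq];
        try eassumption; apply Tg; lra. }
    exfalso. apply (exp_neq_1 (c2 * l)); [apply Rmult_integral_contrapositive; auto | lra].
  - right. exists A1, B1, A2, B2. intros z Tz. split; [apply HX | apply HY]; exact Tz.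
Qed.

Lemma defect_exp_step (A1 B1 A2 B2 c s l : R) :
  (forall z, T z -> x z = A1 + B1 * exp (c * z) /\ y z = A2 + B2 * exp (- (c * z))) ->
  T s -> T (s + l) ->
  defect x y s (s + l) = (exp (c * l) - 1) *
    (A1 * B2 / (exp (c * l) * exp (c * s)) + B1 * A2 * exp (c * s)) + 2 * B1 * B2 * (1 - / exp (c * l)).
Proof.
  intros HF Ts Tsl. unfold defect.
  destruct (HF s Ts) as [-> ->]. destruct (HF (s + l) Tsl) as [-> ->].
  rewrite (Rmult_plus_distr_l c s l), Ropp_plus_distr, !exp_plus, !exp_Ropp.
  pose proof (exp_pos (c * s)). pose proof (exp_pos (c * l)).
  field. lra.
Qed.

(** By [defect_exp_step], [defect x y s (s + l)] depends on [V = exp (c s)] through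
    [alpha / (Q V) + beta V], which is constant along a grid by [defect_shift]. *)
Lemma exp_offsets_zero (a b A1 B1 A2 B2 c : R) : T a -> T b -> a < b -> c <> 0 ->
  ~ const_on T x -> ~ const_on T y ->
  (forall z, T z -> x z = A1 + B1 * exp (c * z) /\ y z = A2 + B2 * exp (- (c * z))) ->
  A1 = 0 /\ A2 = 0.
Proof.
  intros Ta Tb Hab Hc Hnx Hny HF.
  assert (HB1 := coef_neq_0_of_nonconst T x (fun z => exp (c * z)) A1 B1
                  (fun z Tz => proj1 (HF z Tz)) Hnx).
  assert (HB2 := coef_neq_0_of_nonconst T y (fun z => exp (- (c * z))) A2 B2
                  (fun z Tz => proj2 (HF z Tz)) Hny).
  set (l := (b - a) / 3).
  assert (Hl : 0 < l) by (unfold l; lra).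
  assert (Tg : forall z, a <= z <= a + l + l + l -> T z)
    by (intros z Hz; apply (HI a z b); auto; unfold l in *; lra).
  assert (E1 := defect_shift a (a + l) l ltac:(apply Tg; lra) ltac:(apply Tg; lra)
                  ltac:(apply Tg; lra) ltac:(apply Tg; lra) ltac:(lra)).
  assert (E2 := defect_shift (a + l) (a + l + l) l ltac:(apply Tg; lra) ltac:(apply Tg; lra)
                  ltac:(apply Tg; lra) ltac:(apply Tg; lra) ltac:(lra)).
  rewrite !(defect_exp_step A1 B1 A2 B2 c (a + l) l HF),
    (defect_exp_step A1 B1 A2 B2 c a l HF) in E1 by (apply Tg; lra).
  rewrite !(defect_exp_step A1 B1 A2 B2 c (a + l + l) l HF),
    (defect_exp_step A1 B1 A2 B2 c (a + l) l HF) in E2 by (apply Tg; lra).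
  rewrite (Rmult_plus_distr_l c a l), !exp_plus in E1.
  rewrite (Rmult_plus_distr_l c (a + l) l), (Rmult_plus_distr_l c a l), !exp_plus in E2.
  assert (HQ : 0 < exp (c * l)) by apply exp_pos.
  assert (HQ1 : exp (c * l) - 1 <> 0).
  { apply Rminus_eq_contra, exp_neq_1, Rmult_integral_contrapositive.
    split; [exact Hc | lra]. }
  apply Rplus_eq_reg_r in E1, E2.
  apply Rmult_eq_reg_l in E1; [| exact HQ1]. apply Rmult_eq_reg_l in E2; [| exact HQ1].
  destruct (hyperbola_geometric_values (A1 * B2) (B1 * A2) (exp (c * a)) (exp (c * l))
              (exp_pos _) HQ ltac:(lra) E1 E2) as [Z1 Z2].
  apply Rmult_integral in Z1 as [Z1 | Z1]; [| contradiction].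
  apply Rmult_integral in Z2 as [Z2 | Z2]; [contradiction |].
  split; assumption.
Qed.

Lemma case_iv_of_exp (a b A1 B1 A2 B2 c : R) : T a -> T b -> a < b -> c <> 0 ->
  ~ const_on T x -> ~ const_on T y ->
  (forall z, T z -> x z = A1 + B1 * exp (c * z) /\ y z = A2 + B2 * exp (- (c * z))) ->
  case_iv T x y phi.
Proof.
  intros Ta Tb Hab Hc Hnx Hny HF.
  destruct (exp_offsets_zero a b A1 B1 A2 B2 c Ta Tb Hab Hc Hnx Hny HF) as [-> ->].
  destruct (interior_pt_of_lt T a b Ta Tb Hab) as [z0 Hz0].
  destruct (xy_pos z0 Hz0) as [Hx0 Hy0].
  destruct (HF z0 (interior_pt_in T z0 HI Hz0)) as [Ex Ey].
  pose proof (exp_pos (c * z0)). pose proof (exp_pos (- (c * z0))).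
  assert (HB1 : 0 < B1) by nra. assert (HB2 : 0 < B2) by nra.
  destruct (nondecr_rises T x x_mono Hnx) as [u [v [Tu [Tv [Huv Hxuv]]]]].
  rewrite (proj1 (HF u Tu)), (proj1 (HF v Tv)) in Hxuv.
  assert (Hcuv : c * u < c * v) by (apply exp_lt_inv; nra).
  exists B1, B2, c. split; [exact HB1 |]. split; [exact HB2 |]. split; [nra |]. split.
  - intros t Tt. destruct (HF t Tt) as [-> ->]. split; ring.
  - apply phi_of_defect. intros s t Ts Tt _. unfold defect.
    destruct (HF s Ts) as [-> ->]. destruct (HF t Tt) as [-> ->].
    replace (- (c * (t - s))) with (c * s + - (c * t)) by ring.
    rewrite exp_plus, !exp_Ropp.
    pose proof (exp_pos (c * s)). pose proof (exp_pos (c * t)). field. lra.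
Qed.

Lemma case_iii_of_affine (A1 B1 A2 B2 : R) : ~ const_on T x -> ~ const_on T y ->
  (forall z, T z -> x z = A1 + B1 * z /\ y z = A2 + B2 * z) -> case_iii T x y phi.
Proof.
  intros Hnx Hny HF.
  destruct (nondecr_rises T x x_mono Hnx) as [u [v [Tu [Tv [Huv Hxuv]]]]].
  destruct (nonincr_falls T y y_mono Hny) as [u' [v' [Tu' [Tv' [Huv' Hyuv']]]]].
  rewrite (proj1 (HF u Tu)), (proj1 (HF v Tv)) in Hxuv.
  rewrite (proj2 (HF u' Tu')), (proj2 (HF v' Tv')) in Hyuv'.
  exists A1, B1, A2, (- B2). split; [nra |]. split; [nra |]. split.
  - intros t Tt. destruct (HF t Tt) as [-> ->]. split; ring.
  - apply phi_of_defect. intros s t Ts Tt _. unfold defect.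
    destruct (HF s Ts) as [-> ->]. destruct (HF t Tt) as [-> ->]. ring.
Qed.

Lemma smooth_case (t0 : R) : ~ const_on T x -> ~ const_on T y ->
  rises_before T x t0 -> falls_after T y t0 -> case_iii T x y phi \/ case_iv T x y phi.
Proof.
  intros Hnx Hny Hr Hf.
  destruct (nondecr_rises T x x_mono Hnx) as [a [b [Ta [Tb [Hab _]]]]].
  destruct (exp_affine_rates a b Ta Tb Hab Hnx Hny (exp_affine_x t0 Hr Hf) (exp_affine_y t0 Hr Hf))
    as [[A1 [B1 [A2 [B2 [c [Hc HF]]]]]] | [A1 [B1 [A2 [B2 HF]]]]].
  - right. exact (case_iv_of_exp a b A1 B1 A2 B2 c Ta Tb Hab Hc Hnx Hny HF).
  - left. exact (case_iii_of_affine A1 B1 A2 B2 Hnx Hny HF).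
Qed.

(** The supremum of the points after which [y] still falls. *)
Lemma kink_point : ~ const_on T x -> ~ const_on T y ->
  ~ (exists t, rises_before T x t /\ falls_after T y t) ->
  exists s, T s /\ (forall t, T t -> t <= s -> x t = x s) /\ (forall t, T t -> s <= t -> y t = y s).
Proof.
  intros Hnx Hny Hnone.
  destruct (nondecr_rises T x x_mono Hnx) as [u1 [t1 [Tu1 [Tt1 [Hu1 Hx1]]]]].
  destruct (nonincr_falls T y y_mono Hny) as [t2 [v2 [Tt2 [Tv2 [Hv2 Hy2]]]]].
  set (S := fun t => T t /\ falls_after T y t).
  assert (Hub : is_upper_bound S t1).
  { intros t [Tt Ht]. apply Rnot_lt_le. intros Hlt. apply Hnone. exists t. split; [| exact Ht].
    exists u1. split; [exact Tu1 | split; [lra |]]. pose proof (x_mono t1 t Tt1 Tt ltac:(lra)). lra. }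
  assert (S2 : S t2) by (split; [exact Tt2 | exists v2; auto]).
  destruct (completeness S (ex_intro _ t1 Hub) (ex_intro _ t2 S2)) as [s Hs].
  assert (Hs2 : t2 <= s) by (apply Hs, S2).
  assert (Hs1 : s <= t1) by (apply Hs, Hub).
  assert (Ts : T s) by (apply (HI t2 s t1); auto).
  exists s. split; [exact Ts | split].
  - intros t Tt Hts. pose proof (x_mono t s Tt Ts Hts).
    apply NNPP. intros Hne.
    assert (Hts' : t < s) by (destruct (Req_dec t s) as [-> |]; [contradiction | lra]).
    destruct (x_cont s Ts (x s - x t) ltac:(lra)) as [d [Hd Hxd]].
    destruct (is_lub_approx S s (Rmax t (s - d)) Hs) as [e [[Te He] Hlt]].
    { apply Rmax_lub_lt; lra. }
    assert (Hes : e <= s) by (apply Hs; split; auto).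
    assert (Hte : t < e) by (eapply Rle_lt_trans; [apply Rmax_l | exact Hlt]).
    assert (Hxe := Hxd e Te ltac:(pose proof (Rmax_r t (s - d)); rewrite Rabs_left1; lra)).
    apply Rabs_def2 in Hxe. apply Hnone. exists e. split; [| exact He].
    exists t. split; [exact Tt | split; [exact Hte | lra]].
  - intros t Tt Hst. pose proof (y_mono s t Ts Tt Hst).
    apply NNPP. intros Hne.
    destruct (y_cont s Ts (y s - y t) ltac:(lra)) as [d [Hd Hyd]].
    assert (Hst' : s < t) by (destruct (Req_dec s t) as [-> |]; [contradiction | lra]).
    set (e := s + Rmin d (t - s) / 2).
    pose proof (Rmin_l d (t - s)). pose proof (Rmin_r d (t - s)).
    assert (0 < Rmin d (t - s)) by (apply Rmin_pos; lra).
    assert (Te : T e) by (apply (HI s e t); auto; unfold e; lra).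
    assert (Hye := Hyd e Te ltac:(rewrite Rabs_pos_eq; unfold e; lra)).
    apply Rabs_def2 in Hye.
    assert (e <= s); [| unfold e in *; lra].
    apply Hs. split; [exact Te |]. exists t. split; [exact Tt | split; [unfold e; lra | lra]].
Qed.

Lemma rises_after_flat (s : R) : T s -> ~ const_on T x ->
  (forall t, T t -> t <= s -> x t = x s) -> exists t1, T t1 /\ s < t1 /\ x s < x t1.
Proof.
  intros Ts Hnx XL.
  destruct (nondecr_rises T x x_mono Hnx) as [u [v [Tu [Tv [Huv Hxuv]]]]].
  exists v. split; [exact Tv |].
  destruct (Rle_dec v s); [rewrite (XL u), (XL v) in Hxuv by (auto; lra); lra |].
  split; [lra |]. destruct (Rle_dec u s); [rewrite (XL u) in Hxuv by auto; lra |].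
  pose proof (x_mono s u Ts Tu ltac:(lra)). lra.
Qed.

Lemma falls_before_flat (s : R) : T s -> ~ const_on T y ->
  (forall t, T t -> s <= t -> y t = y s) -> exists t2, T t2 /\ t2 < s /\ y s < y t2.
Proof.
  intros Ts Hny YR.
  destruct (nonincr_falls T y y_mono Hny) as [u [v [Tu [Tv [Huv Hyuv]]]]].
  exists u. split; [exact Tu |].
  destruct (Rle_dec s u); [rewrite (YR u), (YR v) in Hyuv by (auto; lra); lra |].
  split; [lra |]. destruct (Rle_dec s v); [rewrite (YR v) in Hyuv by auto; lra |].
  pose proof (y_mono v s Tv Ts ltac:(lra)). lra.
Qed.

Lemma kink_forms (s : R) : T s -> ~ const_on T x -> ~ const_on T y ->
  (forall t, T t -> t <= s -> x t = x s) -> (forall t, T t -> s <= t -> y t = y s) ->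
  interior_pt T s /\ exists c d, 0 < c /\ 0 < d /\
    (forall t, T t -> t <= s -> x t = x s /\ y t = y s - c * (t - s)) /\
    (forall t, T t -> s <= t -> x t = x s + d * (t - s) /\ y t = y s).
Proof.
  intros Ts Hnx Hny XL YR.
  destruct (rises_after_flat s Ts Hnx XL) as [t1 [Tt1 [Hs1 Hx1]]].
  destruct (falls_before_flat s Ts Hny YR) as [t2 [Tt2 [Hs2 Hy2]]].
  assert (Is : interior_pt T s) by (exists t2, t1; auto).
  split; [exact Is |]. destruct (xy_pos s Is) as [Ha Hb].
  set (L := fun t => T t /\ t <= s). set (Rs := fun t => T t /\ s <= t).
  assert (HL : is_interval L).
  { intros p q r [Tp Hp] [Tr Hr] Hpq Hqr. split; [apply (HI p q r) |]; auto; lra. }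
  assert (HR : is_interval Rs).
  { intros p q r [Tp Hp] [Tr Hr] Hpq Hqr. split; [apply (HI p q r) |]; auto; lra. }
  destruct (affine_of_defect_eq L y (- x s)) as [A [B HY]].
  - intros t [Tt _]. exact Tt.
  - exact HL.
  - apply (cont_on_subset T); [intros t [Tt _]; exact Tt | exact y_cont].
  - exists ((t2 + s) / 2), t2, s. unfold L. repeat split; auto; lra.
  - lra.
  - intros p q [Tp Hp] [Tq Hq]. unfold defect. rewrite (XL p Tp Hp), (XL q Tq Hq). ring.
  - destruct (affine_of_defect_eq Rs x (y s)) as [A' [B' HX]].
    + intros t [Tt _]. exact Tt.
    + exact HR.
    + apply (cont_on_subset T); [intros t [Tt _]; exact Tt | exact x_cont].
    + exists ((s + t1) / 2), s, t1. unfold Rs. repeat split; auto; lra.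
    + lra.
    + intros p q [Tp Hp] [Tq Hq]. unfold defect. rewrite (YR p Tp Hp), (YR q Tq Hq). ring.
    + assert (Ls : L s) by (split; [exact Ts | lra]). assert (Rs_s : Rs s) by (split; [exact Ts | lra]).
      rewrite (HY t2), (HY s Ls) in Hy2 by (split; [exact Tt2 | lra]).
      rewrite (HX t1), (HX s Rs_s) in Hx1 by (split; [exact Tt1 | lra]).
      exists (- B), B'. split; [nra |]. split; [nra |]. split.
      * intros t Tt Hts. split; [exact (XL t Tt Hts) |].
        rewrite (HY t), (HY s Ls) by (split; assumption). ring.
      * intros t Tt Hst. split; [| exact (YR t Tt Hst)].
        rewrite (HX t), (HX s Rs_s) by (split; assumption). ring.
Qed.

(** Comparing the defects of [(s - h, s)] and [(s, s + h)]. *)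
Lemma kink_balance (s c d : R) : interior_pt T s ->
  (forall t, T t -> t <= s -> x t = x s /\ y t = y s - c * (t - s)) ->
  (forall t, T t -> s <= t -> x t = x s + d * (t - s) /\ y t = y s) ->
  x s * c = y s * d.
Proof.
  intros Is Left Right.
  assert (Ts : T s) by (apply interior_pt_in; auto).
  destruct Is as [r [r' [Tr [Tr' [Hr Hr']]]]].
  set (h := Rmin (s - r) (r' - s)).
  assert (Hh : 0 < h /\ h <= s - r /\ h <= r' - s).
  { pose proof (Rmin_l (s - r) (r' - s)). pose proof (Rmin_r (s - r) (r' - s)).
    split; [apply Rmin_pos; lra | unfold h; lra]. }
  set (p := s - h).
  assert (Tp : T p) by (apply (HI r p s); auto; unfold p; lra).
  assert (Eph : p + h = s) by (unfold p; ring).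
  assert (Tph : T (p + h + h)) by (apply (HI s _ r'); auto; unfold p; lra).
  assert (E := defect_shift p (p + h) h Tp (eq_ind_r T Ts Eph) (eq_ind_r T Ts Eph) Tph ltac:(lra)).
  rewrite Eph in E. unfold defect in E.
  destruct (Left p Tp ltac:(unfold p; lra)) as [Ex1 Ey1].
  destruct (Right (s + h) ltac:(rewrite <- Eph; exact Tph) ltac:(lra)) as [Ex2 Ey2].
  rewrite Ex1, Ey1, Ex2, Ey2 in E. unfold p in E.
  apply (Rmult_eq_reg_r h); [| lra]. nra.
Qed.

Lemma kink_case (s : R) : T s -> ~ const_on T x -> ~ const_on T y ->
  (forall t, T t -> t <= s -> x t = x s) -> (forall t, T t -> s <= t -> y t = y s) ->
  case_ii T x y phi.
Proof.
  intros Ts Hnx Hny XL YR.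
  destruct (kink_forms s Ts Hnx Hny XL YR) as [Is [c [d [Hc [Hd [Left Right]]]]]].
  destruct (xy_pos s Is) as [Ha Hb].
  assert (Hbal := kink_balance s c d Is Left Right).
  exists s, (x s), (y s), c, d.
  split; [exact Is |]. split; [exact Ha |]. split; [exact Hb |].
  split; [exact Hc |]. split; [exact Hd |]. split; [exact Hbal |]. split.
  - intros t Tt. destruct (Rlt_dec s t), (Rle_dec t s); try lra.
    + destruct (Right t Tt ltac:(lra)) as [-> ->]. split; ring.
    + destruct (Left t Tt ltac:(lra)) as [-> ->]. split; ring.
  - apply phi_of_defect. intros s' t' Ts' Tt' Hst. unfold defect.
    destruct (Rle_dec t' s).
    + destruct (Left s' Ts' ltac:(lra)) as [-> ->], (Left t' Tt' ltac:(lra)) as [-> ->]. ring.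
    + destruct (Right t' Tt' ltac:(lra)) as [-> ->]. destruct (Rle_dec s s').
      * destruct (Right s' Ts' ltac:(lra)) as [-> ->].
        transitivity (y s * d * (t' - s')); [ring | rewrite <- Hbal; ring].
      * destruct (Left s' Ts' ltac:(lra)) as [-> ->].
        transitivity (x s * c * (s - s') + y s * d * (t' - s)); [ring | rewrite <- Hbal; ring].
Qed.

Lemma cases_of_phi_eq : ~ const_on T x \/ ~ const_on T y ->
  case_i T x y phi \/ case_ii T x y phi \/ case_iii T x y phi \/ case_iv T x y phi.
Proof.
  intros Hnc.
  destruct (classic (const_on T x)) as [Cx | Nx].
  - left. apply case_i_of_const_x; [exact Cx | destruct Hnc; tauto].
  - destruct (classic (const_on T y)) as [Cy | Ny].
    + left. exact (case_i_of_const_y Cy Nx).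
    + destruct (classic (exists t, rises_before T x t /\ falls_after T y t))
        as [[t0 [Hr Hf]] | Hnone].
      * right; right. exact (smooth_case t0 Nx Ny Hr Hf).
      * right; left. destruct (kink_point Nx Ny Hnone) as [s [Ts [XL YR]]].
        exact (kink_case s Ts Nx Ny XL YR).
Qed.

End DecreasingPath.

Lemma phi_eq_of_cases (T : R -> Prop) (x y phi : R -> R) :
  case_i T x y phi \/ case_ii T x y phi \/ case_iii T x y phi \/ case_iv T x y phi ->
  phi_eq T x y phi.
Proof.
  intros H s t Ts Tt Hst.
  assert (D : inD T (t - s)) by (exists s, t; auto).
  destruct H as [[a [b [c [_ [_ [[Hf | Hf] Hp]]]]]] |
                 [[s0 [a [b [c [d [_ [_ [_ [_ [_ [Hbal [Hf Hp]]]]]]]]]]]] |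
                 [[a [b [c [d [_ [_ [Hf Hp]]]]]]] | [a [b [c [_ [_ [_ [Hf Hp]]]]]]]]]];
    rewrite (Hp _ D); destruct (Hf s Ts) as [-> ->]; destruct (Hf t Tt) as [-> ->].
  - ring.
  - ring.
  - destruct (Rlt_dec s0 s), (Rle_dec s s0), (Rlt_dec s0 t), (Rle_dec t s0); try lra; nra.
  - ring.
  - replace (- (c * (t - s))) with (c * s + - (c * t)) by ring.
    rewrite exp_plus, !exp_Ropp.
    pose proof (exp_pos (c * s)). pose proof (exp_pos (c * t)). field. lra.
Qed.

Theorem lemma2 (T : R -> Prop) (x y : R -> R) :
  is_interval T -> decreasing_path T x y ->
  forall phi : R -> R,
    phi_eq T x y phi <->
    (case_i T x y phi \/ case_ii T x y phi \/ case_iii T x y phi \/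
     case_iv T x y phi).
Proof.
  intros HI [Hxm [Hym [Hxc [Hyc [Hpos Hnc]]]]] phi. split.
  - intros Hphi. exact (cases_of_phi_eq T x y phi HI Hxm Hym Hxc Hyc Hpos Hphi Hnc).
  - apply phi_eq_of_cases.
Qed.
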